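(* The graph $C_4+3P_1$ is of class $\mathcal C_2$.
   Context: All graphs are finite, simple and undirected. $C_n$ and $P_n$ denote the cycle and the path on $n$ vertices; $kG$ denotes the disjoint union of $k$ copies of $G$ (so $3P_1$ is the edgeless graph on 3 vertices). The join $G+H$ is obtained from vertex-disjoint copies of $G$ and $H$ by adding all edges between $V(G)$ and $V(H)$. A drawing is 1-planar if each edge is crossed at most once (adjacent edges never cross, no edge crosses itself); a graph is 1-planar if it has such a drawing. For a 1-planar drawing $D$, $D^\times$ is the plane graph obtained by turning each crossing into a new degree-4 vertex (a false vertex); $N_{D^\times}(c)$ is the neighbour set of a false vertex $c$. A 1-planar graph is of class $\mathcal C_0$ if it has a 1-planar drawing with $|N_{D^\times}(c_1)\cap N_{D^\times}(c_2)|=0$ for all distinct false vertices; for $i\in\{1,2\}$ it is of class $\mathcal C_i$ if it is not of class $\mathcal C_k$ for any $k<i$ and it has a 1-planar drawing with $|N_{D^\times}(c_1)\cap N_{D^\times}(c_2)|\le i$ for all distinct false vertices $c_1,c_2$. *)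

(* Combinatorial model of 1-planar drawings via the
   planarization D^x and a genus-0 rotation system (combinatorial map). *)
From mathcomp Require Import all_boot all_fingroup.
Set Implicit Arguments. Unset Strict Implicit. Unset Printing Implicit Defensive.

(** * Graphs: a simple graph is a symmetric irreflexive [rel] on a finType. *)

Definition cycle_rel (n : nat) : rel 'I_n :=
  fun i j => (i != j) && ((i.+1 %% n == j) || (j.+1 %% n == i)).

Arguments cycle_rel n : clear implicits.

Definition edgeless_rel (k : nat) : rel 'I_k := fun _ _ => false.

Arguments edgeless_rel k : clear implicits.

(* Join G + H on the disjoint union of the vertex sets. *)
Definition join_rel (T1 T2 : finType) (e1 : rel T1) (e2 : rel T2)
  : rel (T1 + T2)%type :=
  fun x y => match x, y with
  | inl u, inl v => e1 u v
  | inr u, inr v => e2 u v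
  | _, _ => true
  end.

Definition swap_pair (W : Type) (p : W * W) : W * W := (p.2, p.1).
Lemma swap_pairK (W : Type) : involutive (@swap_pair W).
Proof. by case. Qed.
Definition swap_perm (W : finType) : {perm (W * W)} :=
  perm (inv_inj (@swap_pairK W)).

Section Embedding.
Variables (W : finType) (h : rel W).

Definition dart (d : W * W) : bool := h d.1 d.2.

(* s : the rotation permutation on darts: s (x,y) = (x,y') with y' the
   successor of y in the cyclic order around x; s fixes non-darts. *)
Definition rotation_system (s : {perm (W * W)}) : Prop :=
  [/\ forall d, ~~ dart d -> s d = d,
      forall d, dart d -> (s d).1 = d.1
    & forall x y z, h x y -> h x z -> (x, z) \in porbit s (x, y)].

(* face-tracing permutation: (x,y) |-> s (y,x) *)
Definition face_perm (s : {perm (W * W)}) : {perm (W * W)} :=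
  (swap_perm W * s)%g.

Definition nfaces (s : {perm (W * W)}) : nat :=
  #|[set porbit (face_perm s) d | d in [pred d | dart d]]|.

Definition ndarts : nat := #|[pred d | dart d]|.   (* = 2 |E| *)

Definition ncomps : nat := #|[set [set y | connect h x y] | x : W]|.

Definition nedge_comps : nat :=
  #|[set [set y | connect h x y] | x in [pred x | [exists y, h x y]]]|.

(* Euler's formula V - E + F = c + c' (c components, c' of them with an
   edge), i.e. every non-trivial component has genus 0. *)
Definition plane_rotation (s : {perm (W * W)}) : Prop :=
  rotation_system s /\
  2 * (#|W| + nfaces s) = 2 * (ncomps + nedge_comps) + ndarts.

End Embedding.

Section Drawing.
Variables (T : finType) (e : rel T) (k : nat).
(* crossing i : edge (a,b) crosses edge (c,d), where cr i = ((a,b),(c,d)) *)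
Variable cr : 'I_k -> (T * T) * (T * T).

Definition on_edge (p : T * T) (u v : T) : bool := ((u, v) == p) || ((v, u) == p).
Definition crossed_at (i : 'I_k) (u v : T) : bool :=
  on_edge (cr i).1 u v || on_edge (cr i).2 u v.
Definition cr_verts (i : 'I_k) : {set T} :=
  [set (cr i).1.1; (cr i).1.2; (cr i).2.1; (cr i).2.2].

(* D^x : original vertices (inl) plus one false vertex (inr i) per crossing *)
Definition planarization : rel (T + 'I_k)%type :=
  fun x y => match x, y with
  | inl u, inl v => e u v && ~~ [exists i, crossed_at i u v]
  | inl u, inr i => u \in cr_verts i
  | inr i, inl u => u \in cr_verts i
  | inr _, inr _ => false
  end.

Definition valid_crossings : Prop :=
  (forall i, let: ((a, b), (c, d)) := cr i in
     [&& e a b, e c d, a != c, a != d, b != c & b != d])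
  /\ (forall i j u v, e u v -> crossed_at i u v -> crossed_at j u v -> i = j).

Definition one_planar_drawing (s : {perm ((T + 'I_k) * (T + 'I_k))}) : Prop :=
  [/\ valid_crossings,
      plane_rotation planarization s
    & forall i, let: ((a, b), (c, d)) := cr i in
        [/\ s (inr i, inl a) = (inr i, inl c),
            s (inr i, inl c) = (inr i, inl b),
            s (inr i, inl b) = (inr i, inl d)
          & s (inr i, inl d) = (inr i, inl a)]].

Definition false_nbhd (i : 'I_k) : {set (T + 'I_k)} :=
  [set y | planarization (inr i) y].

End Drawing.

Definition has_drawing_bound (T : finType) (e : rel T) (m : nat) : Prop :=
  exists (k : nat) (cr : 'I_k -> (T * T) * (T * T))
         (s : {perm ((T + 'I_k) * (T + 'I_k))}),
    one_planar_drawing e cr s /\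
    forall i j : 'I_k, i != j -> #|false_nbhd e cr i :&: false_nbhd e cr j| <= m.

Definition class_C0 (T : finType) (e : rel T) : Prop := has_drawing_bound e 0.
Definition class_C1 (T : finType) (e : rel T) : Prop :=
  ~ class_C0 e /\ has_drawing_bound e 1.
Definition class_C2 (T : finType) (e : rel T) : Prop :=
  ~ class_C0 e /\ ~ class_C1 e /\ has_drawing_bound e 2.

(* Let D be a 1-planar drawing with k crossings of a K4-free graph G of
   minimum degree 2 in which any two crossings share at most one neighbour.
   Around each crossing the four endpoints appear in the cyclic order a, c, b, d
   of its edges ab and cd; since {a, b, c, d} is not a K4, two consecutive ones
   u, w are non-adjacent in G, and the face of the planarization D^x entered
   along u -> crossing -> w has length at least 4.  A face of length 4 through
   two such "gap" corners would make the two crossings share two neighbours, and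
   gap corners are never consecutive on a face; hence every face F has length at
   least 3 + (number of gap corners on F), so 3 F + k <= 2 |E(D^x)|.  With
   2 |E(D^x)| >= 2 |E(G)| + 4 k and Euler's formula this yields
   |E(G)| <= 3 |V(G)| - 6.  The graph C4 + 3P1 has 7 vertices and 16 edges, so
   it is neither of class C0 nor C1, and an explicit drawing with two crossings
   sharing exactly two neighbours shows that it is of class C2. *)

From mathcomp Require Import all_boot all_fingroup zify.
Set Implicit Arguments. Unset Strict Implicit. Unset Printing Implicit Defensive.

Lemma uniq_leq_card (X : finType) (sq : seq X) (B : {set X}) :
  uniq sq -> {subset sq <= B} -> size sq <= #|B|.
Proof. by move=> sq_uniq sqB; rewrite cardE uniq_leq_size // => x /sqB; rewrite mem_enum. Qed.

Lemma all_total (X : eqType) (sq : seq X) (p : pred X) :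
  (forall x, x \in sq) -> all p sq -> forall x, p x.
Proof. by move=> sq_full /allP p_sq x; apply: p_sq. Qed.

Lemma pair_eta (A B : Type) (p : A * B) a b : p.1 = a -> p.2 = b -> p = (a, b).
Proof. by case: p => ? ? /= -> ->. Qed.

Lemma eq_traject (X : Type) (f g : X -> X) : f =1 g -> traject f =2 traject g.
Proof. by move=> fg x n; elim: n x => //= n IHn x; rewrite fg IHn. Qed.

Lemma card_count (X : finType) (sq : seq X) (p : pred X) :
  uniq sq -> (forall x, x \in sq) -> #|[pred x | p x]| = count p sq.
Proof.
move=> sq_uniq sq_full; rewrite -size_filter -(card_uniqP (filter_uniq p sq_uniq)).
by apply: eq_card => x; rewrite !inE mem_filter sq_full andbT.
Qed.

Section PermOrbits.
Variables (X : finType) (f : {perm X}).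

Lemma porbit_step x y : y \in porbit f x -> f y \in porbit f x.
Proof. by move=> /porbitP[n ->]; rewrite -permM -expgSr mem_porbit. Qed.

Lemma trivIset_porbits (D : {pred X}) : trivIset [set porbit f x | x in D].
Proof.
apply/trivIsetP => _ _ /imsetP[x _ ->] /imsetP[y _ ->] neq_xy.
rewrite -setI_eq0; apply/eqP/setP => z; rewrite !inE.
apply/negP => /andP[zx zy].
have Ex : porbit f z = porbit f x by apply/eqP; rewrite eq_porbit_mem.
have Ey : porbit f z = porbit f y by apply/eqP; rewrite eq_porbit_mem.
by rewrite -Ex -Ey eqxx in neq_xy.
Qed.

Lemma iter_mod_period n x i : iter n f x = x -> iter i f x = iter (i %% n) f x.
Proof.
move=> per; rewrite {1}(divn_eq i n) addnC iterD; congr (iter _ _ _).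
by elim: (i %/ n) => // q IHq; rewrite mulSn iterD IHq per.
Qed.

Lemma porbit_period n x : 0 < n -> iter n f x = x -> porbit f x =i traject f x n.
Proof.
move=> n_gt0 per y; apply/porbitP/trajectP => [[i ->]|[i _ ->]].
  by exists (i %% n); rewrite ?ltn_mod // permX (iter_mod_period _ per).
by exists i; rewrite permX.
Qed.

Lemma double_card_porbit_sparse (C : {set X}) x :
  (forall y, y \in C -> f y \notin C) ->
  2 * #|porbit f x :&: C| <= #|porbit f x|.
Proof.
move=> sparse; set O := porbit f x :&: C.
have disj : O :&: f @: O = set0.
  apply/setP => z; rewrite !inE.
  apply/negP => /andP[/andP[_ zC] /imsetP[y /setIP[_ yC] Ez]].
  by move: (sparse y yC); rewrite -Ez zC.
have <- : #|O :|: f @: O| = 2 * #|O|.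
  by rewrite cardsU disj cards0 subn0 card_imset ?mul2n ?addnn //; apply: perm_inj.
apply: subset_leq_card; apply/subsetP => z /setUP[/setIP[] //|/imsetP[y /setIP[yx _] ->]].
exact: porbit_step.
Qed.

End PermOrbits.

Lemma card_porbits_reps (X : finType) (f : {perm X}) (D : {pred X}) n (reps : seq X) :
  0 < n -> {in D, forall x, iter n f x = x} ->
  uniq reps -> {subset reps <= D} ->
  {in D, forall x, has (fun r => x \in traject f r n) reps} ->
  {in reps &, forall r1 r2, r1 \in traject f r2 n -> r1 = r2} ->
  #|[set porbit f x | x in D]| = size reps.
Proof.
move=> n_gt0 period reps_uniq repsD reps_cover reps_apart.
have orbitE x : x \in D -> porbit f x =i traject f x n.
  by move=> xD; apply: porbit_period n_gt0 (period x xD).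
have -> : [set porbit f x | x in D] = [set porbit f r | r in reps].
  apply/setP => O; apply/imsetP/imsetP => [[x xD ->]|[r rR ->]]; last first.
    by exists r; rewrite ?repsD.
  have /hasP[r rR xr] := reps_cover x xD; exists r => //.
  by apply/eqP; rewrite eq_porbit_mem orbitE ?repsD.
rewrite card_in_imset ?(card_uniqP reps_uniq) // => r1 r2 r1R r2R E.
by apply: reps_apart => //; rewrite -orbitE ?repsD // -E porbit_id.
Qed.

Lemma trivIset_card_bound (X : finType) (P : {set {set X}}) (C : {set X}) m :
  trivIset P -> C \subset cover P ->
  (forall B, B \in P -> #|B :&: C| + m <= #|B|) ->
  m * #|P| + #|C| <= #|cover P|.
Proof.
move=> trP sCP P_bound.
have C_le : #|C| <= \sum_(B in P) #|B :&: C|.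
  rewrite -sum1_card.
  apply: (@leq_trans (\sum_(x in C) \sum_(B in P) (x \in B : nat))).
    apply: leq_sum => x xC; have /bigcupP[B BP xB] := subsetP sCP x xC.
    by rewrite (bigD1 B) //= xB.
  rewrite exchange_big; apply: leq_sum => B _.
  rewrite -sum1_card big_mkcond [leqRHS]big_mkcond; apply: leq_sum => x _.
  by rewrite inE; case: (x \in B); case: (x \in C).
rewrite -(eqP trP) mulnC -sum_nat_const.
apply: leq_trans (leq_add (leqnn _) C_le) _.
by rewrite -big_split; apply: leq_sum => B BP /=; rewrite addnC P_bound.
Qed.

Lemma cycle_rel_sym n : symmetric (cycle_rel n).
Proof. by move=> i j; rewrite /cycle_rel eq_sym orbC. Qed.

Lemma cycle_rel_irr n : irreflexive (cycle_rel n).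
Proof. by move=> i; rewrite /cycle_rel eqxx. Qed.

Lemma join_rel_sym (T1 T2 : finType) (e1 : rel T1) (e2 : rel T2) :
  symmetric e1 -> symmetric e2 -> symmetric (join_rel e1 e2).
Proof. by move=> e1_sym e2_sym [x|x] [y|y] /=. Qed.

Lemma join_rel_irr (T1 T2 : finType) (e1 : rel T1) (e2 : rel T2) :
  irreflexive e1 -> irreflexive e2 -> irreflexive (join_rel e1 e2).
Proof. by move=> e1_irr e2_irr [x|x] /=. Qed.

Definition K4_free (T : finType) (e : rel T) : Prop :=
  forall a b c d, e a b -> e a c -> e a d -> e b c -> e b d -> e c d -> False.

Lemma connected_ncomps (W : finType) (h : rel W) x0 y0 :
  (forall x y, connect h x y) -> h x0 y0 -> ncomps h = 1 /\ nedge_comps h = 1.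
Proof.
move=> conn h_x0y0.
have compT x : [set y | connect h x y] = setT by apply/setP => y; rewrite !inE conn.
split; apply/eqP/cards1P; exists setT; apply/setP => Z; rewrite inE.
  apply/imsetP/eqP => [[x _ ->]|->]; first exact: compT.
  by exists x0; rewrite ?compT.
apply/imsetP/eqP => [[x _ ->]|->]; first exact: compT.
by exists x0; rewrite ?compT // inE; apply/existsP; exists y0.
Qed.

Section RotationOfLists.
Variables (W : finType) (nbrs : W -> seq W).
Hypothesis nbrs_uniq : forall x, uniq (nbrs x).

Definition rot_step (d : W * W) : W * W := (d.1, next (nbrs d.1) d.2).

Lemma rot_step_inj : injective rot_step.
Proof.
apply: (can_inj (g := fun d => (d.1, prev (nbrs d.1) d.2))) => -[x y] /=.
by rewrite prev_next.
Qed.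

Definition rot_perm : {perm (W * W)} := perm rot_step_inj.

Lemma iter_rot_perm n x y : iter n rot_perm (x, y) = (x, iter n (next (nbrs x)) y).
Proof. by elim: n => //= n ->; rewrite permE. Qed.

Lemma rot_perm_rotation (h : rel W) :
  (forall x y, h x y = (y \in nbrs x)) -> rotation_system h rot_perm.
Proof.
move=> h_nbrs; split.
- by move=> [x y]; rewrite /dart h_nbrs permE /rot_step next_nth => /negbTE ->.
- by move=> [x y] _; rewrite permE.
move=> x y z; rewrite !h_nbrs => y_nbrs z_nbrs; apply/porbitP.
have /iter_findex <- : fconnect (next (nbrs x)) y z.
  by rewrite (fconnect_cycle (cycle_next (nbrs_uniq x)) y_nbrs).
by exists (findex (next (nbrs x)) y z); rewrite permX iter_rot_perm.
Qed.

End RotationOfLists.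

Section FaceTracing.
Variables (W : finType) (h : rel W) (s : {perm (W * W)}).
Hypotheses (h_sym : symmetric h) (h_irr : irreflexive h).
Hypothesis s_rot : rotation_system h s.
Local Notation phi := (face_perm s).

Lemma face_permE d : phi d = s (d.2, d.1).
Proof. by rewrite /face_perm permM /swap_perm permE. Qed.

Lemma dart_swap d : dart h d -> dart h (d.2, d.1).
Proof. by rewrite /dart /= h_sym. Qed.

Lemma rotation_fst d : dart h d -> (s d).1 = d.1.
Proof. by have [_ s_fst _] := s_rot; apply: s_fst. Qed.

Lemma rotation_dart d : dart h d -> dart h (s d).
Proof.
move=> hd; case: (boolP (dart h (s d))) => // not_sd.
have [s_fix _ _] := s_rot.
have sd_d := perm_inj (s_fix _ not_sd).
by rewrite sd_d hd in not_sd.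
Qed.

Lemma face_perm_dart d : dart h d -> dart h (phi d).
Proof. by move=> hd; rewrite face_permE; apply/rotation_dart/dart_swap. Qed.

Lemma face_perm_fst d : dart h d -> (phi d).1 = d.2.
Proof. by move=> hd; rewrite face_permE rotation_fst //; apply: dart_swap. Qed.

Lemma face_perm_neq d : dart h d -> phi d != d.
Proof.
move=> hd; apply/eqP => phi_d.
have := face_perm_fst hd; rewrite phi_d => d1_d2.
by move: hd; rewrite /dart d1_d2 h_irr.
Qed.

Lemma face_dart d x : dart h d -> x \in porbit phi d -> dart h x.
Proof.
move=> hd /porbitP[n ->]; rewrite permX.
by elim: n => //= n IHn; apply: face_perm_dart.
Qed.

Lemma cover_faces :
  cover [set porbit phi d | d in [pred d | dart h d]] = [set d | dart h d].
Proof.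
apply/setP => x; rewrite inE; apply/bigcupP/idP => [[_ /imsetP[d hd ->]]|hx].
  exact: face_dart.
by exists (porbit phi x); [apply: imset_f | apply: porbit_id].
Qed.

Hypothesis s_fixfree : forall d, dart h d -> s d != d.

Lemma face_perm2_neq d : dart h d -> phi (phi d) != d.
Proof.
move=> hd; apply/eqP => phi2_d.
have phi_d : phi d = (d.2, d.1).
  apply: pair_eta; first exact: face_perm_fst.
  by rewrite -(face_perm_fst (face_perm_dart hd)) phi2_d.
by have := s_fixfree (dart_swap hd); rewrite -face_permE phi_d eqxx.
Qed.

Lemma three_le_card_face d : dart h d -> 3 <= #|porbit phi d|.
Proof.
move=> hd; apply: (uniq_leq_card (sq := [:: d; phi d; phi (phi d)])).
  rewrite /= !inE !negb_or ![d == _]eq_sym face_perm_neq ?face_perm2_neq //=.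
  by rewrite eq_sym face_perm_neq ?face_perm_dart.
have phid := porbit_step (porbit_id phi d).
move=> x; rewrite !in_cons in_nil orbF.
by case/or3P => /eqP->; [apply: porbit_id | apply: phid | apply: porbit_step].
Qed.

End FaceTracing.

Lemma crossed_atC (T : finType) k (cr : 'I_k -> (T * T) * (T * T)) i u v :
  crossed_at cr i u v = crossed_at cr i v u.
Proof.
by rewrite /crossed_at /on_edge [((v, u) == _) || _]orbC [((v, u) == (cr i).2) || _]orbC.
Qed.

Section OnePlanarDrawing.
Variables (T : finType) (e : rel T) (k : nat) (cr : 'I_k -> (T * T) * (T * T)).
Variable s : {perm ((T + 'I_k) * (T + 'I_k))}.
Hypotheses (e_sym : symmetric e) (e_irr : irreflexive e).
Hypothesis drawing : one_planar_drawing e cr s.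
Local Notation h := (planarization e cr).
Local Notation phi := (face_perm s).

Lemma planarization_sym : symmetric h.
Proof.
move=> [u|i] [v|j] //=; rewrite e_sym.
by congr (_ && ~~ _); apply: eq_existsb => i; rewrite crossed_atC.
Qed.

Lemma planarization_irr : irreflexive h.
Proof. by move=> [u|i] //=; rewrite e_irr. Qed.

Lemma crossing_valid i : let: ((a, b), (c, d)) := cr i in
  [&& e a b, e c d, a != c, a != d, b != c & b != d].
Proof. by case: drawing => [[valid _] _ _]; apply: valid. Qed.

Lemma crossing_rotation i : let: ((a, b), (c, d)) := cr i in
  [/\ s (inr i, inl a) = (inr i, inl c), s (inr i, inl c) = (inr i, inl b),
      s (inr i, inl b) = (inr i, inl d) & s (inr i, inl d) = (inr i, inl a)].
Proof. by case: drawing => _ _; apply. Qed.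

Lemma drawing_rotation : rotation_system h s.
Proof. by case: drawing => _ []. Qed.

Lemma crossed_at_vert i u w : crossed_at cr i u w -> u \in cr_verts cr i.
Proof.
rewrite /crossed_at /on_edge /cr_verts; case: (cr i) => [[a b] [c d]] /=.
rewrite !xpair_eqE !inE -!orbA.
by case/or4P => /andP[/eqP E1 /eqP E2]; subst; rewrite eqxx ?orbT.
Qed.

Lemma crossed_at_inj i u w1 w2 :
  crossed_at cr i u w1 -> crossed_at cr i u w2 -> w1 = w2.
Proof.
have := crossing_valid i; rewrite /crossed_at /on_edge.
case: (cr i) => [[a b] [c d]] /= valid; rewrite !xpair_eqE -!orbA.
case/or4P => /andP[/eqP E1 /eqP E2]; case/or4P => /andP[/eqP E3 /eqP E4];
  subst; move: valid; by rewrite ?e_irr ?eqxx ?andbF.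
Qed.

Definition first_hop (u w : T) : T + 'I_k :=
  if [pick i | crossed_at cr i u w] is Some i then inr i else inl w.

Lemma first_hop_adj u w : e u w -> h (inl u) (first_hop u w).
Proof.
move=> e_uw; rewrite /first_hop; case: pickP => [i|no_cross] /=.
  exact: crossed_at_vert.
by rewrite e_uw; apply/existsPn => i; rewrite no_cross.
Qed.

Lemma first_hop_inj u : injective (first_hop u).
Proof.
move=> w1 w2; rewrite /first_hop.
case: pickP => [i1 cr1|_]; case: pickP => [i2 cr2|_] //=; last by case.
by case=> i12; subst; apply: crossed_at_inj cr1 cr2.
Qed.

Lemma card_nbhd_le_planarization u :
  #|[set w | e u w]| <= #|[set y | h (inl u) y]|.
Proof.
rewrite -(card_imset _ (@first_hop_inj u)); apply: subset_leq_card.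
by apply/subsetP => _ /imsetP[w + ->]; rewrite !inE; apply: first_hop_adj.
Qed.

Lemma four_le_card_crossing_nbhd i : 4 <= #|[set y | h (inr i) y]|.
Proof.
have := crossing_valid i; rewrite /cr_verts.
case E: (cr i) => [[a b] [c d]] /= /and5P[e_ab e_cd neq_ac neq_ad /andP[neq_bc neq_bd]].
have neq_ab : a != b by apply: contraTneq e_ab => ->; rewrite e_irr.
have neq_cd : c != d by apply: contraTneq e_cd => ->; rewrite e_irr.
apply: (uniq_leq_card (sq := [:: inl a; inl b; inl c; inl d])).
  by rewrite /= !inE !negb_or /= neq_ab neq_ac neq_ad neq_bc neq_bd neq_cd.
move=> x; rewrite !in_cons in_nil orbF.
by case/or4P => /eqP->; rewrite inE /= /cr_verts E !inE eqxx ?orbT.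
Qed.

Lemma darts_bound : \sum_u #|[set w | e u w]| + 4 * k <= ndarts h.
Proof.
have -> : ndarts h = \sum_x #|[set y | h x y]|.
  rewrite /ndarts -sum1_card; transitivity (\sum_x \sum_(y | h x y) 1).
    by rewrite pair_big_dep; apply: eq_bigl => -[x y].
  by apply: eq_bigr => x _; rewrite sum1dep_card.
rewrite big_sumType /=; apply: leq_add.
  by apply: leq_sum => u _; apply: card_nbhd_le_planarization.
rewrite mulnC -{1}(card_ord k) -sum_nat_const.
by apply: leq_sum => i _; apply: four_le_card_crossing_nbhd.
Qed.

Let phi_dart := face_perm_dart planarization_sym drawing_rotation.
Let phi_fst := face_perm_fst planarization_sym drawing_rotation.

Hypothesis e_mindeg : forall u, 2 <= #|[set w | e u w]|.

Lemma rotation_fixfree d : dart h d -> s d != d.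
Proof.
have [_ _ s_orbit] := drawing_rotation.
case: d => [[u|i] y] hd.
  set N := [set z | h (inl u) z].
  have N_ge2 : 2 <= #|N| := leq_trans (e_mindeg u) (card_nbhd_le_planarization u).
  have /set0Pn[z] : N :\ y != set0.
    by rewrite -card_gt0; move: N_ge2; rewrite (cardsD1 y N); case: (y \in N) => /=; lia.
  rewrite !inE => /andP[neq_zy h_uz]; apply/eqP => s_fix.
  have /porbitP[n] := s_orbit _ _ _ hd h_uz.
  by rewrite permX iter_fix // => -[z_y]; rewrite z_y eqxx in neq_zy.
case: y hd => [v|j] //; rewrite /dart /= /cr_verts.
have := crossing_valid i; have := crossing_rotation i.
case: (cr i) => [[a b] [c d]] /= [s_a s_c s_b s_d] valid.
rewrite !inE -!orbA; case/or4P => /eqP->; rewrite ?s_a ?s_c ?s_b ?s_d;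
  apply/eqP; case=> E; by move: valid; rewrite E ?eqxx ?andbF.
Qed.

Hypothesis e_K4free : K4_free e.

(* Around the crossing of [ab] and [cd] the endpoints are met in the cyclic order
   [a, c, b, d]; as [a, b, c, d] do not span a K4, one of these four consecutive
   pairs [(u, w)] is not an edge. *)
Definition kite_gap (i : 'I_k) : T * T :=
  let: ((a, b), (c, d)) := cr i in
  if ~~ e a c then (a, c) else if ~~ e c b then (c, b)
  else if ~~ e b d then (b, d) else (d, a).

Lemma kite_gapP i :
  [/\ s (inr i, inl (kite_gap i).1) = (inr i, inl (kite_gap i).2),
      ~~ e (kite_gap i).1 (kite_gap i).2,
      (kite_gap i).1 \in cr_verts cr i & (kite_gap i).2 \in cr_verts cr i].
Proof.
rewrite /kite_gap /cr_verts; have := crossing_valid i; have := crossing_rotation i.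
case: (cr i) => [[a b] [c d]] /= [s_a s_c s_b s_d] /andP[e_ab /andP[e_cd _]].
case: ifP => [n_ac|/negbFE e_ac]; first by rewrite s_a n_ac !inE !eqxx ?orbT.
case: ifP => [n_cb|/negbFE e_cb]; first by rewrite s_c n_cb !inE !eqxx ?orbT.
case: ifP => [n_bd|/negbFE e_bd]; first by rewrite s_b n_bd !inE !eqxx ?orbT.
rewrite s_d !inE !eqxx ?orbT; split=> //.
apply/negP => e_da; apply: (e_K4free e_ab e_ac _ _ e_bd e_cd).
  by rewrite e_sym.
by rewrite e_sym.
Qed.

Definition gap_dart (i : 'I_k) : (T + 'I_k) * (T + 'I_k) := (inl (kite_gap i).1, inr i).

Definition gap_darts : {set (T + 'I_k) * (T + 'I_k)} := [set gap_dart i | i : 'I_k].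

Lemma card_gap_darts : #|gap_darts| = k.
Proof. by rewrite card_imset ?card_ord // => i j []. Qed.

Lemma dart_gap i : dart h (gap_dart i).
Proof. by have [_ _ ? _] := kite_gapP i. Qed.

Lemma face_perm_gap i : phi (gap_dart i) = (inr i, inl (kite_gap i).2).
Proof. by have [? _ _ _] := kite_gapP i; rewrite face_permE. Qed.

Lemma kite_gap_neq i : (kite_gap i).1 != (kite_gap i).2.
Proof.
have [s_gap _ _ _] := kite_gapP i.
have := rotation_fixfree (dart_swap planarization_sym (dart_gap i)).
by rewrite /= s_gap; apply: contraNneq => ->.
Qed.

Lemma face_perm_gap_notin d : d \in gap_darts -> phi d \notin gap_darts.
Proof.
case/imsetP => i _ ->; rewrite face_perm_gap.
by apply/imsetP => -[j _ []].
Qed.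

Lemma iter3_face_perm_gap_neq i : iter 3 phi (gap_dart i) != gap_dart i.
Proof.
have dart1 := phi_dart (dart_gap i); have dart2 := phi_dart dart1.
apply/eqP => /= phi3.
have phi2 : phi (phi (gap_dart i)) = (inl (kite_gap i).2, inl (kite_gap i).1).
  apply: pair_eta.
    by rewrite (phi_fst dart1) face_perm_gap.
  by rewrite -(phi_fst dart2) phi3.
have [_ no_edge _ _] := kite_gapP i.
by move: dart2; rewrite phi2 /dart /= e_sym (negbTE no_edge).
Qed.

Lemma gap_dart_link i j :
  phi (phi (gap_dart i)) = gap_dart j -> (kite_gap i).2 = (kite_gap j).1.
Proof.
move=> phi2_ij; have := phi_fst (phi_dart (dart_gap i)).
by rewrite phi2_ij face_perm_gap => -[].
Qed.

Lemma face_period4_gap_darts d :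
  d \in gap_darts -> iter 4 phi d = d -> phi (phi d) \notin gap_darts ->
  porbit phi d :&: gap_darts \subset [set d].
Proof.
move=> dC period phi2_notC; apply/subsetP => x /setIP[].
rewrite (porbit_period _ period) // => /trajectP[[|[|[|[|m]]]] // _ ->] xC.
- by rewrite inE.
- by rewrite (negbTE (face_perm_gap_notin dC)) in xC.
- by rewrite (negbTE phi2_notC) in xC.
- by have := face_perm_gap_notin xC; rewrite -iterS period dC.
Qed.

Hypothesis share1 :
  forall i j, i != j -> #|false_nbhd e cr i :&: false_nbhd e cr j| <= 1.

(* A face of length 4 through two gap darts would make their crossings share
   both gap endpoints as neighbours. *)
Lemma iter4_face_perm_gap_neq i j :
  phi (phi (gap_dart i)) = gap_dart j -> iter 4 phi (gap_dart i) != gap_dart i.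
Proof.
move=> phi2_ij; apply/eqP => /= phi4.
have phi2_ji : phi (phi (gap_dart j)) = gap_dart i by rewrite -phi2_ij.
have neq_ij : i != j.
  have := face_perm2_neq planarization_sym drawing_rotation rotation_fixfree (dart_gap i).
  by apply: contraTneq => ij; rewrite phi2_ij ij eqxx.
have neq_uv : (kite_gap i).1 != (kite_gap j).1.
  by rewrite -(gap_dart_link phi2_ij) kite_gap_neq.
have [_ _ ui_i wi_i] := kite_gapP i; have [_ _ uj_j wj_j] := kite_gapP j.
rewrite (gap_dart_link phi2_ij) in wi_i; rewrite (gap_dart_link phi2_ji) in wj_j.
have := share1 neq_ij; apply/negP; rewrite -ltnNge.
apply: (uniq_leq_card (sq := [:: inl (kite_gap i).1; inl (kite_gap j).1])).
  by rewrite /= inE andbT.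
move=> x; rewrite !in_cons in_nil orbF.
by case/orP => /eqP->; rewrite !inE /= ?ui_i ?wj_j ?uj_j ?wi_i.
Qed.

Lemma face_gap_bound d :
  dart h d -> #|porbit phi d :&: gap_darts| + 3 <= #|porbit phi d|.
Proof.
move=> hd; set F := porbit phi d; set g := #|F :&: gap_darts|.
have F_ge3 : 3 <= #|F|.
  exact: three_le_card_face planarization_sym planarization_irr drawing_rotation
    rotation_fixfree _ hd.
have F_half : 2 * g <= #|F| := double_card_porbit_sparse d face_perm_gap_notin.
have [FC0|[d1 /setIP[d1F d1C]]] := set_0Vmem (F :&: gap_darts).
  by rewrite /g FC0 cards0.
have g_gt0 : 0 < g by rewrite /g card_gt0; apply/set0Pn; exists d1; apply/setIP.
have F_d1 : porbit phi d1 = F by apply/eqP; rewrite eq_porbit_mem.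
have period : iter #|F| phi d1 = d1 by rewrite -F_d1 iter_porbit.
have [i _ d1_i] := imsetP d1C.
have F_neq3 : #|F| != 3.
  by apply: contraNneq (iter3_face_perm_gap_neq i) => F3; rewrite -d1_i -F3 period eqxx.
have F4_g : #|F| = 4 -> g <= 1.
  move=> F4; have period4 : iter 4 phi d1 = d1 by rewrite -F4.
  have [/imsetP[j _ phi2_j]|phi2_notC] := boolP (phi (phi d1) \in gap_darts).
    rewrite d1_i in phi2_j; have := iter4_face_perm_gap_neq phi2_j.
    by rewrite -d1_i period4 eqxx.
  rewrite -(cards1 d1) /g -F_d1.
  exact: subset_leq_card (face_period4_gap_darts d1C period4 phi2_notC).
by case: (eqVneq #|F| 4) => [/F4_g|]; lia.
Qed.

Lemma faces_bound : 3 * nfaces h s + k <= ndarts h.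
Proof.
have := trivIset_card_bound (C := gap_darts) (m := 3)
  (trivIset_porbits phi [pred d | dart h d]).
have card_darts : #|[set d | dart h d]| = ndarts h by apply: eq_card => d; rewrite inE.
rewrite (cover_faces planarization_sym drawing_rotation) card_gap_darts card_darts.
apply.
  by apply/subsetP => _ /imsetP[i _ ->]; rewrite inE dart_gap.
by move=> _ /imsetP[d hd ->]; apply: face_gap_bound.
Qed.

(* Euler's formula combined with [faces_bound] and [darts_bound]; [k] cancels. *)
Lemma edge_bound : 0 < #|T| -> \sum_u #|[set w | e u w]| + 12 <= 6 * #|T|.
Proof.
move=> /card_gt0P[t0 _].
have [y t0_y] : exists y, h (inl t0) y.
  have : 0 < #|[set y | h (inl t0) y]|.
    by have := leq_trans (e_mindeg t0) (card_nbhd_le_planarization t0); lia.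
  by case/card_gt0P => y; rewrite inE; exists y.
have comp_t0 : nedge_comps h > 0.
  rewrite card_gt0; apply/set0Pn; exists [set z | connect h (inl t0) z].
  by apply: imset_f; apply/existsP; exists y.
have comps_gt0 : ncomps h > 0.
  by rewrite card_gt0; apply/set0Pn; exists [set z | connect h (inl t0) z]; apply: imset_f.
have [_ [_ euler] _] := drawing; rewrite card_sum card_ord in euler.
have := faces_bound; have := darts_bound; lia.
Qed.

End OnePlanarDrawing.

Lemma has_drawing_boundW (T : finType) (e : rel T) m n :
  m <= n -> has_drawing_bound e m -> has_drawing_bound e n.
Proof.
move=> le_mn [k [cr [s [drawing share]]]]; exists k, cr, s; split=> // i j neq_ij.
exact: leq_trans (share i j neq_ij) le_mn.
Qed.

Lemma has_drawing_bound1_edges (T : finType) (e : rel T) :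
  symmetric e -> irreflexive e -> K4_free e ->
  (forall u, 2 <= #|[set w | e u w]|) -> 0 < #|T| ->
  has_drawing_bound e 1 -> \sum_u #|[set w | e u w]| + 12 <= 6 * #|T|.
Proof.
move=> e_sym e_irr e_K4free e_mindeg T_gt0 [k [cr [s [drawing share1]]]].
exact: (edge_bound e_sym e_irr drawing e_mindeg e_K4free share1 T_gt0).
Qed.

Section C4_join_3P1.

Local Notation V := ('I_4 + 'I_3)%type.
Local Notation G := (join_rel (cycle_rel 4) (edgeless_rel 3)).

Definition c0 : V := inl (@Ordinal 4 0 isT).
Definition c1 : V := inl (@Ordinal 4 1 isT).
Definition c2 : V := inl (@Ordinal 4 2 isT).
Definition c3 : V := inl (@Ordinal 4 3 isT).
Definition p0 : V := inr (@Ordinal 3 0 isT).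
Definition p1 : V := inr (@Ordinal 3 1 isT).
Definition p2 : V := inr (@Ordinal 3 2 isT).

Definition enumV : seq V := [:: c0; c1; c2; c3; p0; p1; p2].

Lemma mem_enumV u : u \in enumV.
Proof. by case: u => [[[|[|[|[|n]]]] ?]|[[|[|[|n]]] ?]]. Qed.

Lemma uniq_enumV : uniq enumV.
Proof. by vm_compute. Qed.

Lemma G_sym : symmetric G.
Proof. by apply: join_rel_sym; [apply: cycle_rel_sym | by []]. Qed.

Lemma G_irr : irreflexive G.
Proof. by apply: join_rel_irr; [apply: cycle_rel_irr | by []]. Qed.

Lemma card_nbhd_G u : #|[set w | G u w]| = count (G u) enumV.
Proof. by rewrite -(card_count _ uniq_enumV mem_enumV); apply: eq_card => w; rewrite !inE. Qed.

Lemma G_mindeg u : 2 <= #|[set w | G u w]|.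
Proof.
rewrite card_nbhd_G; move: u; apply: all_total mem_enumV _.
by vm_compute.
Qed.

Lemma G_degree_sum : \sum_u #|[set w | G u w]| = 32.
Proof.
rewrite (eq_bigr _ (fun u _ => card_nbhd_G u)) big_sumType !big_ord_recr !big_ord0.
by vm_compute.
Qed.

Lemma G_K4free : K4_free G.
Proof.
have noK4 : all (fun a => all (fun b => all (fun c => all (fun d =>
    ~~ [&& G a b, G a c, G a d, G b c, G b d & G c d]) enumV) enumV) enumV) enumV.
  by vm_compute.
move=> a b c d ab ac ad bc bd cd.
move/allP: noK4 => /(_ a (mem_enumV a)) /allP /(_ b (mem_enumV b)).
move=> /allP /(_ c (mem_enumV c)) /allP /(_ d (mem_enumV d)).
by rewrite ab ac ad bc bd cd.
Qed.

Lemma G_not_bound1 : ~ has_drawing_bound G 1.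
Proof.
move/(has_drawing_bound1_edges G_sym G_irr G_K4free G_mindeg).
by rewrite G_degree_sum card_sum !card_ord => /(_ isT).
Qed.

Definition x0 : 'I_2 := @Ordinal 2 0 isT.
Definition x1 : 'I_2 := @Ordinal 2 1 isT.

Lemma ord2_cases (i : 'I_2) : i = x0 \/ i = x1.
Proof. by case: i => [[|[|n]] ?] //; [left|right]; apply: val_inj. Qed.

Definition enumI2 : seq 'I_2 := [:: x0; x1].

Lemma mem_enumI2 (i : 'I_2) : i \in enumI2.
Proof. by case: (ord2_cases i) => ->; rewrite !inE eqxx ?orbT. Qed.

Local Notation W := (V + 'I_2)%type.

(* Both crossings have [p0] and [p2] among their endpoints. *)
Definition crossing (i : 'I_2) : (V * V) * (V * V) :=
  if val i == 0 then ((c2, p2), (p0, c1)) else ((p0, c0), (c3, p2)).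

Local Notation h := (planarization G crossing).

Definition crossing_ends (i : 'I_2) : seq V :=
  let: ((a, b), (c, d)) := crossing i in [:: a; b; c; d].

Definition rotation (x : W) : seq W :=
  match x with
  | inl u =>
    if u == c0 then [:: inl c1; inl p2; inr x1; inl c3; inl p1]
    else if u == c1 then [:: inl c2; inr x0; inl p2; inl c0; inl p1]
    else if u == c2 then [:: inl p1; inl c3; inl p0; inr x0; inl c1]
    else if u == c3 then [:: inl c2; inl p1; inl c0; inr x1; inl p0]
    else if u == p0 then [:: inr x0; inl c2; inl c3; inr x1]
    else if u == p1 then [:: inl c2; inl c1; inl c0; inl c3]
    else [:: inr x0; inr x1; inl c0; inl c1]
  | inr i =>
    if val i == 0 then [:: inl c2; inl p0; inl p2; inl c1]
    else [:: inl p0; inl c3; inl c0; inl p2]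
  end.

Definition enumW : seq W := map inl enumV ++ map inr enumI2.

Lemma mem_enumW x : x \in enumW.
Proof.
by case: x => [u|i]; rewrite mem_cat; apply/orP; [left|right]; apply: map_f;
  rewrite ?mem_enumV ?mem_enumI2.
Qed.

Definition enumWW : seq (W * W) := [seq (x, y) | x <- enumW, y <- enumW].

Lemma mem_enumWW d : d \in enumWW.
Proof. by case: d => x y; apply: allpairs_f; apply: mem_enumW. Qed.

Lemma uniq_enumWW : uniq enumWW.
Proof. by vm_compute. Qed.

Definition planarization_list (x y : W) : bool :=
  match x, y with
  | inl u, inl w => G u w && ~~ has (fun i => crossed_at crossing i u w) enumI2
  | inl u, inr i | inr i, inl u => u \in crossing_ends i
  | inr _, inr _ => false
  end.

Lemma planarizationE x y : h x y = planarization_list x y.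
Proof.
have ends i u : (u \in cr_verts crossing i) = (u \in crossing_ends i).
  rewrite /cr_verts /crossing_ends.
  by case: (crossing i) => [[a b] [c d]]; rewrite !inE -!orbA.
case: x y => [u|i] [w|j] //=; rewrite ?ends //; congr (_ && ~~ _).
apply/existsP/idP => [[i]|/or3P[cross|cross|//]]; [|by exists x0|by exists x1].
by case: (ord2_cases i) => -> ->; rewrite ?orbT.
Qed.

Lemma planarization_rotation x y : h x y = (y \in rotation x).
Proof.
have rotation_ok : all (fun x => all (fun y =>
    planarization_list x y == (y \in rotation x)) enumW) enumW.
  by vm_compute.
rewrite planarizationE; apply/eqP.
by move/allP: rotation_ok => /(_ x (mem_enumW x)) /allP /(_ y (mem_enumW y)).
Qed.

Lemma rotation_uniq x : uniq (rotation x).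
Proof.
have all_uniq : all (fun x => uniq (rotation x)) enumW by vm_compute.
exact: all_total mem_enumW all_uniq x.
Qed.

Definition G_rot : {perm (W * W)} := rot_perm rotation_uniq.

Lemma G_rot_rotation : rotation_system h G_rot.
Proof. exact: rot_perm_rotation planarization_rotation. Qed.

Definition face_step (d : W * W) : W * W := rot_step rotation (d.2, d.1).

Lemma face_G_rotE : face_perm G_rot =1 face_step.
Proof. by move=> d; rewrite /face_perm permM /swap_perm !permE. Qed.

Lemma traject_face_G_rot : traject (face_perm G_rot) =2 traject face_step.
Proof. exact: eq_traject face_G_rotE. Qed.

Lemma dart_rotation d : dart h d = (d.2 \in rotation d.1).
Proof. exact: planarization_rotation. Qed.

Lemma ndarts_G : ndarts h = 40.
Proof.
rewrite /ndarts (card_count _ uniq_enumWW mem_enumWW).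
rewrite (eq_count (a2 := fun d => d.2 \in rotation d.1)); last exact: dart_rotation.
by vm_compute.
Qed.

(* Every face has length 3 or 4; a face is represented by its first dart in
   [enumWW]. *)
Definition face_reps : seq (W * W) :=
  [seq d <- enumWW | (d.2 \in rotation d.1) &&
     all (fun n => index d enumWW <= index (iter n face_step d) enumWW) (iota 0 12)].

Lemma nfaces_G_rot : nfaces h G_rot = 13.
Proof.
have period : all (fun d => (d.2 \in rotation d.1) ==> (iter 12 face_step d == d)) enumWW.
  by vm_compute.
have cover : all (fun d => (d.2 \in rotation d.1) ==>
    has (fun r => d \in traject face_step r 12) face_reps) enumWW.
  by vm_compute.
have apart : all (fun r1 => all (fun r2 =>
    (r1 \in traject face_step r2 12) ==> (r1 == r2)) face_reps) face_reps.
  by vm_compute.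
have size_reps : size face_reps = 13 by vm_compute.
rewrite -size_reps /nfaces.
apply: (@card_porbits_reps _ (face_perm G_rot) [pred d | dart h d] 12 face_reps).
- by [].
- move=> d; rewrite inE dart_rotation (eq_iter face_G_rotE) => hd.
  by apply/eqP; move: (all_total mem_enumWW period d); rewrite hd.
- exact/filter_uniq/uniq_enumWW.
- move=> r; rewrite mem_filter => /andP[/andP[r_dart _] _].
  by rewrite inE dart_rotation.
- move=> d; rewrite inE dart_rotation => hd.
  rewrite (eq_has (a2 := fun r => d \in traject face_step r 12)).
    by move: (all_total mem_enumWW cover d); rewrite hd.
  by move=> r; rewrite traject_face_G_rot.
- move=> r1 r2 r1R r2R; rewrite traject_face_G_rot => r12.
  by apply/eqP; move/allP: apart => /(_ r1 r1R) /allP /(_ r2 r2R); rewrite r12.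
Qed.

Lemma connect_planarization_G x y : connect h x y.
Proof.
pose hub : W := inl c0.
have near_hub : all (fun x => [|| x == hub, x \in rotation hub |
    has (fun z => (z \in rotation hub) && (x \in rotation z)) enumW]) enumW.
  by vm_compute.
have hub_x x' : connect h hub x'.
  case/or3P: (all_total mem_enumW near_hub x') => [/eqP->|hub_x'|/hasP[z _ /andP[hub_z z_x']]].
  - exact: connect0.
  - by apply: connect1; rewrite planarization_rotation.
  by apply: (connect_trans (y := z)); apply: connect1; rewrite planarization_rotation.
have h_sym : symmetric h := planarization_sym crossing G_sym.
by apply: connect_trans (hub_x y); rewrite (sym_connect_sym h_sym).
Qed.

Lemma G_rot_plane : plane_rotation h G_rot.
Proof.
split; first exact: G_rot_rotation.
have c0_c1 : h (inl c0) (inl c1) by rewrite planarization_rotation.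
have [-> ->] := connected_ncomps connect_planarization_G c0_c1.
by rewrite !card_sum !card_ord nfaces_G_rot ndarts_G.
Qed.

Lemma G_valid_crossings : valid_crossings G crossing.
Proof.
split; first by case=> [[|[|n]] ?].
have once : all (fun u => all (fun w =>
    ~~ (crossed_at crossing x0 u w && crossed_at crossing x1 u w)) enumV) enumV.
  by vm_compute.
move=> i j u w _; case: (ord2_cases i) => ->; case: (ord2_cases j) => -> // cr0 cr1;
  move/allP: once => /(_ u (mem_enumV u)) /allP /(_ w (mem_enumV w));
  by rewrite cr0 cr1.
Qed.

Lemma G_rot_crossing i : let: ((a, b), (c, d)) := crossing i in
  [/\ G_rot (inr i, inl a) = (inr i, inl c), G_rot (inr i, inl c) = (inr i, inl b),
      G_rot (inr i, inl b) = (inr i, inl d) & G_rot (inr i, inl d) = (inr i, inl a)].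
Proof. by case: (ord2_cases i) => ->; rewrite /= !permE; split; vm_compute. Qed.

Lemma G_rot_drawing : one_planar_drawing G crossing G_rot.
Proof. split; [exact: G_valid_crossings | exact: G_rot_plane | exact: G_rot_crossing]. Qed.

Lemma crossings_share2 (i j : 'I_2) :
  i != j -> #|false_nbhd G crossing i :&: false_nbhd G crossing j| <= 2.
Proof.
have shared : all (fun u => (u \in crossing_ends x0) && (u \in crossing_ends x1) ==>
    (u == p0) || (u == p2)) enumV.
  by vm_compute.
have sub01 : false_nbhd G crossing x0 :&: false_nbhd G crossing x1 \subset
    [set inl p0; inl p2].
  apply/subsetP => -[u|k] /setIP[]; rewrite !inE !planarizationE //= => u0 u1.
  by move: (all_total mem_enumV shared u); rewrite u0 u1.
have card01 : #|false_nbhd G crossing x0 :&: false_nbhd G crossing x1| <= 2.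
  by apply: leq_trans (subset_leq_card sub01) _; rewrite cards2.
by case: (ord2_cases i) => ->; case: (ord2_cases j) => ->; rewrite // setIC.
Qed.

Lemma G_bound2 : has_drawing_bound G 2.
Proof. by exists 2, crossing, G_rot; split; [exact: G_rot_drawing | exact: crossings_share2]. Qed.

End C4_join_3P1.

Theorem lemma13 : class_C2 (join_rel (cycle_rel 4) (edgeless_rel 3)).
Proof.
split; [|split]; last exact: G_bound2.
  by move/(has_drawing_boundW (isT : 0 <= 1)); apply: G_not_bound1.
by case=> _; apply: G_not_bound1.
Qed.
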